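(* Let $G,H,L$ be convergence groups such that every compact subset of $\Gamma_s(G,L)$ is equicontinuous, and let $u:G\times H\to L$ be a separately continuous bihomomorphism. Then $u$ is jointly continuous in each of the following cases: (i) $H$ is locally compact; (ii) $G$ and $H$ are first countable and $L$ is a topological group.
   Context: All groups are abelian. A convergence structure on a set $X$ assigns to each $x$ a collection of filters converging to $x$. This assignment must satisfy three conditions: point ultrafilters converge to their point; finite intersections of filters converging to $x$ converge to $x$; and finer filters of convergent filters converge. A map is continuous if it sends filters converging to $x$ to filters converging to the image of $x$. A convergence group is an abelian group with a convergence structure such that $\mathcal F\to x$, $\mathcal G\to y$ imply $\mathcal F-\mathcal G\to x-y$. Topological groups are convergence groups. $G\times H$ carries the product convergence structure, in which a filter converges iff its projections converge. A convergence space is Hausdorff if limits are unique. A subset $K$ is compact if every ultrafilter containing $K$ converges to a point of $K$. A convergence space is locally compact if it is Hausdorff and each convergent filter contains a compact set. A convergence space is first countable if for every filter $\mathcal F\to x$ there is a filter $\mathcal V\subseteq\mathcal F$ with a countable base such that $\mathcal V\to x$. A bihomomorphism is a map that is a homomorphism in each variable. It is separately continuous if it is continuous in each variable separately. $\Gamma(G,L)$ is the group of continuous homomorphisms $G\to L$, and $\Gamma_s(G,L)$ is $\Gamma(G,L)$ with the topology of pointwise convergence. A set $M\subseteq\Gamma(G,L)$ is equicontinuous if for every filter $\mathcal F\to0$ in $G$, the filter generated by $\{\varphi(x):\varphi\in M,x\in F\}$, $F\in\mathcal F$, converges to $0$ in $L$. *)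

From HB Require Import structures.
From mathcomp Require Import all_boot all_algebra.
Set Implicit Arguments. Unset Strict Implicit. Unset Printing Implicit Defensive.
Import GRing.Theory.
Local Open Scope ring_scope.

Definition set_family (X : Type) := (X -> Prop) -> Prop.

Definition is_filter (X : Type) (F : set_family X) : Prop :=
  F (fun _ => True) /\
  ~ F (fun _ => False) /\
  (forall A B, F A -> F B -> F (fun z => A z /\ B z)) /\
  (forall A B : X -> Prop, (forall z, A z -> B z) -> F A -> F B).

Definition ultrafilter (X : Type) (F : set_family X) : Prop :=
  is_filter F /\ forall A : X -> Prop, F A \/ F (fun z => ~ A z).

Definition principal (X : Type) (x : X) : set_family X := fun A => A x.

Definition fmeet (X : Type) (F G : set_family X) : set_family X :=
  fun A => F A /\ G A.

Definition fmap (X Y : Type) (f : X -> Y) (F : set_family X) : set_family Y :=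
  fun B => F (fun x => B (f x)).

Definition fprod (X Y : Type) (F : set_family X) (G : set_family Y)
  : set_family (X * Y) :=
  fun S => exists A B, F A /\ G B /\ forall a b, A a -> B b -> S (a, b).

Record convergence (X : Type) := Convergence {
  conv : set_family X -> X -> Prop;
  conv_point : forall x, conv (principal x) x;
  conv_meet : forall F G x, is_filter F -> is_filter G ->
     conv F x -> conv G x -> conv (fmeet F G) x;
  conv_finer : forall F G x, is_filter F -> is_filter G ->
     (forall A, F A -> G A) -> conv F x -> conv G x
}.

Definition continuous (X Y : Type) (cX : convergence X) (cY : convergence Y)
  (f : X -> Y) : Prop :=
  forall F x, is_filter F -> conv cX F x -> conv cY (fmap f F) (f x).

Definition conv_group (G : zmodType) (cG : convergence G) : Prop :=
  forall F F' x y, is_filter F -> is_filter F' ->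
    conv cG F x -> conv cG F' y ->
    conv cG (fmap (fun p : G * G => p.1 - p.2) (fprod F F')) (x - y).

Definition prod_conv (X Y : Type) (cX : convergence X) (cY : convergence Y)
  (F : set_family (X * Y)) (p : X * Y) : Prop :=
  conv cX (fmap fst F) p.1 /\ conv cY (fmap snd F) p.2.

Definition hausdorff (X : Type) (cv : set_family X -> X -> Prop) : Prop :=
  forall F x y, is_filter F -> cv F x -> cv F y -> x = y.

Definition compact (X : Type) (cv : set_family X -> X -> Prop) (K : X -> Prop)
  : Prop :=
  forall U, ultrafilter U -> U K -> exists x, K x /\ cv U x.

Definition locally_compact (X : Type) (cX : convergence X) : Prop :=
  hausdorff (conv cX) /\
  forall F x, is_filter F -> conv cX F x ->
    exists K, compact (conv cX) K /\ F K.

Definition countable_base (X : Type) (V : set_family X) : Prop :=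
  exists B : nat -> X -> Prop, (forall n, V (B n)) /\
    forall A, V A -> exists n, forall z, B n z -> A z.

Definition first_countable (X : Type) (cX : convergence X) : Prop :=
  forall F x, is_filter F -> conv cX F x ->
    exists V, is_filter V /\ (forall A, V A -> F A) /\ countable_base V /\
      conv cX V x.

Definition is_topology (X : Type) (op : (X -> Prop) -> Prop) : Prop :=
  op (fun _ => True) /\
  (forall A B, op A -> op B -> op (fun z => A z /\ B z)) /\
  (forall (I : Type) (A : I -> X -> Prop), (forall i, op (A i)) ->
     op (fun z => exists i, A i z)).

Definition topological (X : Type) (cX : convergence X) : Prop :=
  exists op, is_topology op /\
    forall F x, is_filter F ->
      (conv cX F x <-> forall U, op U -> U x -> F U).

Definition topological_group (G : zmodType) (cG : convergence G) : Prop :=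
  conv_group cG /\ topological cG.

Definition is_hom (G L : zmodType) (f : G -> L) : Prop :=
  forall a b, f (a + b) = f a + f b.

Definition Gamma (G L : zmodType) (cG : convergence G) (cL : convergence L)
  := { f : G -> L | is_hom f /\ continuous cG cL f }.

Definition Gamma_s_conv (G L : zmodType) (cG : convergence G)
  (cL : convergence L) (Phi : set_family (Gamma cG cL)) (phi : Gamma cG cL)
  : Prop :=
  forall x : G, conv cL (fmap (fun psi : Gamma cG cL => proj1_sig psi x) Phi)
                        (proj1_sig phi x).

(* Equicontinuity of M in Gamma(G,L).  For empty M the generated family
   is not a proper filter; empty M is (vacuously) equicontinuous. *)
Definition equicontinuous (G L : zmodType) (cG : convergence G)
  (cL : convergence L) (M : Gamma cG cL -> Prop) : Prop :=
  forall F, is_filter F -> conv cG F 0 -> (exists phi, M phi) ->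
    conv cL (fun A : L -> Prop => exists F0, F F0 /\
               forall (phi : Gamma cG cL) (x : G), M phi -> F0 x ->
                 A (proj1_sig phi x)) 0.

Definition is_bihom (G H L : zmodType) (u : G -> H -> L) : Prop :=
  (forall y, is_hom (fun x => u x y)) /\ (forall x, is_hom (u x)).

Definition separately_continuous (G H L : Type) (cG : convergence G)
  (cH : convergence H) (cL : convergence L) (u : G -> H -> L) : Prop :=
  (forall x, continuous cH cL (u x)) /\
  (forall y, continuous cG cL (fun x => u x y)).

Definition jointly_continuous (G H L : Type) (cG : convergence G)
  (cH : convergence H) (cL : convergence L) (u : G -> H -> L) : Prop :=
  forall F p, is_filter F -> prod_conv cG cH F p ->
    conv cL (fmap (fun q : G * H => u q.1 q.2) F) (u p.1 p.2).

Arguments Gamma_s_conv {G L} cG cL Phi phi.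
Arguments equicontinuous {G L} cG cL M.
Arguments Gamma {G L} cG cL.

From Pilot Require Import Defs.
From mathcomp Require Import all_boot all_algebra.
From Stdlib Require Import Classical IndefiniteDescription.
Import GRing.Theory.

(* 1. Bilinearity reduces joint continuity to continuity at the origin:
      u(x,y) - u(p,q) = u(x-p, y-q) + (u(x,q) - u(p,q)) + (u(p,y) - u(p,q)),
      and the last two terms are handled by separate continuity.
   2. Key estimate: if X -> 0 in G and Y eventually lies in a compact K of H,
      then u(X,Y) -> 0.  Indeed y |-> u(-,y) is continuous H -> Gamma_s(G,L),
      so the image of K is compact in Gamma_s(G,L), hence equicontinuous.
   3. Case (i): by local compactness every filter Y -> 0 contains a compact set.
   4. Case (ii): convergence of filters on G x H into a topological space is
      determined by sequences when G and H are first countable; a convergent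
      sequence together with its limit is compact, so step 2 applies again. *)

Local Open Scope ring_scope.

Section Filters.
Context {X : Type}.
Implicit Types (F U : set_family X) (A B P : X -> Prop).

Lemma filterT {F} : is_filter F -> F (fun _ => True).
Proof. by case. Qed.

Lemma filterI {F A B} : is_filter F -> F A -> F B -> F (fun z => A z /\ B z).
Proof. by move=> [_ [_ [hI _]]]; apply: hI. Qed.

Lemma filterS {F A B} : is_filter F -> F A -> (forall z, A z -> B z) -> F B.
Proof. by move=> [_ [_ [_ hS]]] hA hAB; apply: hS hA. Qed.

Lemma filter_nonempty {F A} : is_filter F -> F A -> exists x, A x.
Proof.
move=> hF hA; apply: NNPP => hempty; apply: hF.2.1.
by apply: (filterS hF hA) => z Az; apply: hempty; exists z.
Qed.

Lemma filter_escape {F A P} : is_filter F -> F A -> ~ F P -> exists x, A x /\ ~ P x.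
Proof.
move=> hF hA hP; apply: NNPP => hno; apply: hP; apply: (filterS hF hA) => z Az.
by apply: NNPP => nPz; apply: hno; exists z.
Qed.

Lemma filter_principal (x : X) : is_filter (principal x).
Proof. by split; [|split; [|split]] => // A B; apply. Qed.

Lemma filter_fmap {Y : Type} (f : X -> Y) {F} : is_filter F -> is_filter (fmap f F).
Proof.
move=> hF; split; [exact: filterT|split; [exact: hF.2.1|split]].
- by move=> A B; apply: filterI.
- by move=> A B hAB hA; apply: (filterS hF hA) => z; apply: hAB.
Qed.

Lemma ultrafilter_compl {U A} : ultrafilter U -> ~ U A -> U (fun z => ~ A z).
Proof. by move=> [_ hUu] hA; case: (hUu A). Qed.

Lemma ultrafilter_union {U A B} :
  ultrafilter U -> U (fun w => A w \/ B w) -> U A \/ U B.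
Proof.
move=> hU hAB; case: (classic (U A)) => [|/(ultrafilter_compl hU) hnA]; [by left|right].
by apply: (filterS hU.1 (filterI hU.1 hAB hnA)) => w [[]].
Qed.

Lemma ultrafilter_finite_range {U} {y : nat -> X} {N} :
  ultrafilter U -> U (fun w => exists2 n, (n < N)%N & w = y n) ->
  exists n, U (fun w => w = y n).
Proof.
move=> hU; elim: N => [|N IH] hN.
  by have [w [n]] := filter_nonempty hU.1 hN.
have hsplit : U (fun w => w = y N \/ exists2 n, (n < N)%N & w = y n).
  apply: (filterS hU.1 hN) => w [n]; rewrite ltnS leq_eqVlt => /orP [/eqP -> ->|hn ->].
  - by left.
  - by right; exists n.
by case: (ultrafilter_union hU hsplit) => [hyN|]; [exists N|apply: IH].
Qed.

(* The Frechet filter of tails of nat; a sequence s converges to x iff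
   fmap s frech converges to x. *)
Definition frech : set_family nat :=
  fun S => exists N, forall n, (N <= n)%N -> S n.

Lemma filter_frech : is_filter frech.
Proof.
split; [by exists 0%N|split; [by move=> [N hN]; apply: (hN N)|split]].
- move=> A B [N hN] [M hM]; exists (maxn N M) => n; rewrite geq_max => /andP [hn hm].
  by split; [apply: hN|apply: hM].
- by move=> A B hAB [N hN]; exists N => n hn; apply/hAB/hN.
Qed.

Lemma decreasing_base {V} : is_filter V -> countable_base V ->
  exists C : nat -> X -> Prop, (forall n, V (C n)) /\
    forall A, V A -> exists N, forall n, (N <= n)%N -> forall z, C n z -> A z.
Proof.
move=> hV [B [hB bB]].
exists (fun n z => forall k, (k <= n)%N -> B k z); split.
- elim=> [|n IH].
    by apply: (filterS hV (hB 0%N)) => z hz k; rewrite leqn0 => /eqP ->.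
  apply: (filterS hV (filterI hV IH (hB n.+1))) => z [hz hzn] k.
  by rewrite leq_eqVlt => /orP [/eqP ->|]; last apply: hz.
move=> A /bB [N hN]; exists N => n hn z hz; exact/hN/hz.
Qed.

End Filters.

Lemma filter_fprod {X Y : Type} {F : set_family X} {F' : set_family Y} :
  is_filter F -> is_filter F' -> is_filter (Defs.fprod F F').
Proof.
move=> hF hF'; split; [|split; [|split]].
- exists (fun _ => True), (fun _ => True).
  by split; [exact: filterT hF|split; [exact: filterT hF'|]].
- move=> [A [B [hA [hB hAB]]]].
  have [a Aa] := filter_nonempty hF hA; have [b Bb] := filter_nonempty hF' hB.
  exact: hAB Aa Bb.
- move=> S T [A [B [hA [hB hAB]]]] [A' [B' [hA' [hB' hAB']]]].
  exists (fun z => A z /\ A' z), (fun z => B z /\ B' z).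
  split; first exact: filterI. split; first exact: filterI.
  by move=> a b [? ?] [? ?]; split; [apply: hAB|apply: hAB'].
- move=> S T hST [A [B [hA [hB hAB]]]]; exists A, B; do 2 split => //.
  by move=> a b ha hb; apply: hST; apply: hAB.
Qed.

Section ConvergenceSpaces.
Context {V : Type} (c : convergence V).

Lemma conv_ext {T : Type} {F : set_family T} {f g : T -> V} {z} :
  is_filter F -> (forall t, f t = g t) -> conv c (fmap f F) z -> conv c (fmap g F) z.
Proof.
move=> hF efg; apply: conv_finer; try exact: filter_fmap.
by move=> A hA; apply: (filterS hF hA) => t; rewrite efg.
Qed.

Lemma conv_const {T : Type} {F : set_family T} (a : V) :
  is_filter F -> conv c (fmap (fun _ => a) F) a.
Proof.
move=> hF; apply: (conv_finer (filter_principal a) (filter_fmap _ hF) _ (conv_point c a)).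
by move=> A hA; apply: (filterS hF (filterT hF)).
Qed.

Lemma conv_of_point {U x} : is_filter U -> U (fun w => w = x) -> conv c U x.
Proof.
move=> hU hx; apply: (conv_finer (filter_principal x) hU _ (conv_point c x)).
by move=> A hA; apply: (filterS hU hx) => w ->.
Qed.

Lemma convergent_sequence_compact {y : nat -> V} {y0} :
  conv c (fmap y frech) y0 -> compact (conv c) (fun w => (exists n, w = y n) \/ w = y0).
Proof.
move=> hy U hU hUK.
case: (classic (forall N, U (fun w => exists2 n, (N <= n)%N & w = y n))) => [htail|].
  exists y0; split; first by right.
  apply: conv_finer hy; [exact: filter_fmap filter_frech|exact: hU.1|].
  by move=> A [N hN]; apply: (filterS hU.1 (htail N)) => w [n hn ->]; apply: hN.
move=> /not_all_ex_not [N /(ultrafilter_compl hU) hnottail].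
have hfin : U (fun w => w = y0 \/ exists2 n, (n < N)%N & w = y n).
  apply: (filterS hU.1 (filterI hU.1 hUK hnottail)) => w [[[n ->]|->] hn].
  - by right; exists n => //; rewrite ltnNge; apply/negP => hNn; apply: hn; exists n.
  - by left.
case: (ultrafilter_union hU hfin) => [h0|/(ultrafilter_finite_range hU) [n hn]].
- by exists y0; split; [right|apply: conv_of_point hU.1 h0].
- by exists (y n); split; [left; exists n|apply: conv_of_point hU.1 hn].
Qed.

Lemma conv_sequence_in_base {W : set_family V} {C : nat -> V -> Prop} {s : nat -> V} {w} :
  is_filter W -> (forall A, W A -> exists N, forall n, (N <= n)%N -> forall z, C n z -> A z) ->
  (forall n, C n (s n)) -> conv c W w -> conv c (fmap s frech) w.
Proof.
move=> hW bC hs; apply: conv_finer => //; first exact: filter_fmap filter_frech.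
by move=> A /bC [N hN]; exists N => n hn; apply: hN hn _ (hs n).
Qed.

End ConvergenceSpaces.

Section ConvergenceGroups.
Context {V : zmodType} {c : convergence V}.
Hypothesis cg : conv_group c.

Lemma conv_sub {T : Type} {F : set_family T} {f g : T -> V} {a b} :
  is_filter F -> conv c (fmap f F) a -> conv c (fmap g F) b ->
  conv c (fmap (fun t => f t - g t) F) (a - b).
Proof.
move=> hF hf hg; have := cg _ _ _ _ (filter_fmap f hF) (filter_fmap g hF) hf hg.
apply: conv_finer => [||S [A [B [hA [hB hAB]]]]].
- by apply/filter_fmap/filter_fprod; apply: filter_fmap.
- exact: filter_fmap hF.
- by apply: (filterS hF (filterI hF hA hB)) => t [ha hb]; apply: hAB.
Qed.

Lemma conv_add {T : Type} {F : set_family T} {f g : T -> V} {a b} :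
  is_filter F -> conv c (fmap f F) a -> conv c (fmap g F) b ->
  conv c (fmap (fun t => f t + g t) F) (a + b).
Proof.
move=> hF hf hg; have hng := conv_sub hF (conv_const c 0 hF) hg.
have -> : a + b = a - (0 - b) by rewrite sub0r opprK.
by apply: conv_ext hF _ (conv_sub hF hf hng) => t; rewrite sub0r opprK.
Qed.

Lemma conv_translate {T : Type} {F : set_family T} {f : T -> V} {a} :
  is_filter F -> conv c (fmap f F) a -> conv c (fmap (fun t => f t - a) F) 0.
Proof. by move=> hF hf; rewrite -(subrr a); apply: conv_sub hF hf (conv_const c a hF). Qed.

End ConvergenceGroups.

Lemma conv_by_sequences (X Y Z : Type) (cX : convergence X) (cY : convergence Y)
  (cZ : convergence Z) (f : X * Y -> Z) a b z :
  first_countable cX -> first_countable cY -> topological cZ ->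
  (forall q : nat -> X * Y, conv cX (fmap (fun n => (q n).1) frech) a ->
     conv cY (fmap (fun n => (q n).2) frech) b ->
     conv cZ (fmap (fun n => f (q n)) frech) z) ->
  forall F, is_filter F -> conv cX (fmap fst F) a -> conv cY (fmap snd F) b ->
    conv cZ (fmap f F) z.
Proof.
move=> fcX fcY [op [_ hop]] hseq F hF ha hb.
apply/(hop _ _ (filter_fmap f hF)) => U hU hUz; apply: NNPP => hnot.
have [V1 [hV1 [sV1 [cbV1 cV1]]]] := fcX _ _ (filter_fmap fst hF) ha.
have [V2 [hV2 [sV2 [cbV2 cV2]]]] := fcY _ _ (filter_fmap snd hF) hb.
have [C1 [hC1 bC1]] := decreasing_base hV1 cbV1.
have [C2 [hC2 bC2]] := decreasing_base hV2 cbV2.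
have hbad n : exists q, (C1 n q.1 /\ C2 n q.2) /\ ~ U (f q).
  exact: filter_escape hF (filterI hF (sV1 _ (hC1 n)) (sV2 _ (hC2 n))) hnot.
have [q hq] := functional_choice _ hbad.
have hq1 := conv_sequence_in_base cX hV1 bC1 (fun n => (hq n).1.1) cV1.
have hq2 := conv_sequence_in_base cY hV2 bC2 (fun n => (hq n).1.2) cV2.
have [N hN] := (hop _ _ (filter_fmap _ filter_frech)).1 (hseq q hq1 hq2) U hU hUz.
exact: (hq N).2 (hN N (leqnn N)).
Qed.

Lemma Gamma_s_conv_finer (G L : zmodType) (cG : convergence G) (cL : convergence L)
  (Phi Psi : set_family (Gamma cG cL)) phi :
  is_filter Phi -> is_filter Psi -> (forall A, Phi A -> Psi A) ->
  Gamma_s_conv cG cL Phi phi -> Gamma_s_conv cG cL Psi phi.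
Proof.
move=> hPhi hPsi sub h x; apply: conv_finer (h x); try exact: filter_fmap.
by move=> A; apply: sub.
Qed.

Lemma compact_image (X Y : Type) (cvX : set_family X -> X -> Prop)
  (cvY : set_family Y -> Y -> Prop) (f : X -> Y) (K : X -> Prop) :
  (forall F F' y, is_filter F -> is_filter F' -> (forall A, F A -> F' A) ->
     cvY F y -> cvY F' y) ->
  (forall U x, ultrafilter U -> cvX U x -> cvY (fmap f U) (f x)) ->
  compact cvX K -> compact cvY (fun y => exists x, K x /\ y = f x).
Proof.
move=> finer hf hK U hU hUfK.
have hsec y : exists x, (exists x', K x' /\ y = f x') -> K x /\ y = f x.
  case: (classic (exists x', K x' /\ y = f x')) => [[x' hx']|hn]; first by exists x'.
  have [_ [x' _]] := filter_nonempty hU.1 hUfK.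
  by exists x' => /hn.
have [s hs] := functional_choice _ hsec.
have hW : ultrafilter (fmap s U) by split; [apply: filter_fmap hU.1|move=> A; apply: hU.2].
have [x [Kx cx]] := hK _ hW (filterS hU.1 hUfK (fun y hy => (hs y hy).1)).
exists (f x); split; first by exists x.
apply: finer (hf _ _ hW cx); [exact: filter_fmap hW.1|exact: hU.1|].
by move=> B hB; apply: (filterS hU.1 (filterI hU.1 hB hUfK)) => y [hy /hs [_ ->]].
Qed.

Lemma hom_sub {A B : zmodType} {f : A -> B} : is_hom f -> forall a b, f (a - b) = f a - f b.
Proof. by move=> hf a b; apply/eqP; rewrite eq_sym subr_eq -hf subrK. Qed.

Section Bihomomorphisms.
Variables (G H L : zmodType) (cG : convergence G) (cH : convergence H)
  (cL : convergence L) (u : G -> H -> L).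
Hypotheses (hb : is_bihom u) (hs : separately_continuous cG cH cL u).

Lemma bihom_expand x y p q :
  u x y = u (x - p) (y - q) + (u x q - u p q) + (u p y - u p q) + u p q.
Proof.
by rewrite (hom_sub (hb.2 _)) !(hom_sub (hb.1 _)) subrK addrA !subrK.
Qed.

Definition continuous_at_origin : Prop :=
  forall F : set_family (G * H), is_filter F ->
    conv cG (fmap fst F) 0 -> conv cH (fmap snd F) 0 ->
    conv cL (fmap (fun q : G * H => u q.1 q.2) F) 0.

Lemma joint_continuity_from_origin :
  conv_group cG -> conv_group cH -> conv_group cL ->
  continuous_at_origin -> jointly_continuous cG cH cL u.
Proof.
move=> cgG cgH cgL h0 F [p1 p2] hF [/= hX hY].
pose shift (q : G * H) := (q.1 - p1, q.2 - p2).
have hcenter := h0 _ (filter_fmap shift hF)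
  (conv_translate cgG hF hX) (conv_translate cgH hF hY).
have hfirst := conv_translate cgL hF (hs.2 p2 _ _ (filter_fmap fst hF) hX).
have hsecond := conv_translate cgL hF (hs.1 p1 _ _ (filter_fmap snd hF) hY).
have := conv_add cgL hF (conv_add cgL hF (conv_add cgL hF hcenter hfirst) hsecond)
  (conv_const cL (u p1 p2) hF).
rewrite !add0r /=; apply: conv_ext hF _ => q.
by rewrite [RHS](bihom_expand _ _ p1 p2).
Qed.

Definition partial_map (y : H) : Gamma cG cL :=
  exist _ (fun x => u x y) (conj (hb.1 y) (hs.2 y)).

Definition partial_image (K : H -> Prop) (phi : Gamma cG cL) : Prop :=
  exists y, K y /\ phi = partial_map y.

Lemma partial_image_compact {K} :
  compact (conv cH) K -> compact (Gamma_s_conv cG cL) (partial_image K).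
Proof.
apply: compact_image; first exact: Gamma_s_conv_finer.
by move=> U y hU hy x; apply: hs.1 _ _ hU.1 hy.
Qed.

(* The family generating the filter in the definition of equicontinuity. *)
Definition uniform_image (M : Gamma cG cL -> Prop) (F : set_family G) : set_family L :=
  fun A => exists F0, F F0 /\ forall phi x, M phi -> F0 x -> A (proj1_sig phi x).

Lemma filter_uniform_image M F :
  is_filter F -> (exists phi, M phi) -> is_filter (uniform_image M F).
Proof.
move=> hF [phi0 hphi0]; split; [|split; [|split]].
- by exists (fun _ => True); split; first exact: filterT.
- move=> [F0 [hF0 hA]]; have [x hx] := filter_nonempty hF hF0; exact: hA hphi0 hx.
- move=> A B [F0 [hF0 hA]] [F1 [hF1 hB]]; exists (fun x => F0 x /\ F1 x).
  by split; [apply: filterI|move=> phi x hphi [h0 h1]; split; [apply: hA|apply: hB]].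
- by move=> A B hAB [F0 [hF0 hA]]; exists F0; split => // phi x hphi hx; apply/hAB/hA.
Qed.

Hypothesis hcomp : forall K : Gamma cG cL -> Prop,
  compact (Gamma_s_conv cG cL) K -> equicontinuous cG cL K.

Lemma conv_zero_on_compact {T : Type} {F : set_family T} {X : T -> G} {Y : T -> H}
  {K : H -> Prop} :
  is_filter F -> conv cG (fmap X F) 0 -> compact (conv cH) K ->
  F (fun t => K (Y t)) -> conv cL (fmap (fun t => u (X t) (Y t)) F) 0.
Proof.
move=> hF hX hK hFK.
have [t0 Kt0] := filter_nonempty hF hFK.
have hM : exists phi, partial_image K phi by exists (partial_map (Y t0)), (Y t0).
have := hcomp _ (partial_image_compact hK) _ (filter_fmap X hF) hX hM.
apply: conv_finer; [exact: filter_uniform_image (filter_fmap X hF) hM|exact: filter_fmap|].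
move=> A [F0 [hF0 hA]]; apply: (filterS hF (filterI hF hF0 hFK)) => t [h0 hK'].
by apply: (hA (partial_map (Y t)) (X t) _ h0); exists (Y t).
Qed.

Lemma origin_continuity_locally_compact :
  locally_compact cH -> continuous_at_origin.
Proof.
move=> [_ hLC] F hF hX hY.
have [K [hK hFK]] := hLC _ _ (filter_fmap snd hF) hY.
exact: conv_zero_on_compact hF hX hK hFK.
Qed.

Lemma origin_continuity_first_countable :
  first_countable cG -> first_countable cH -> topological cL -> continuous_at_origin.
Proof.
move=> fcG fcH topL; apply: conv_by_sequences fcG fcH topL _ => q hq1 hq2.
apply: (conv_zero_on_compact filter_frech hq1 (convergent_sequence_compact cH hq2)).
by exists 0%N => n _; left; exists n.
Qed.

End Bihomomorphisms.

Theorem proposition3p2 (G H L : zmodType)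
  (cG : convergence G) (cH : convergence H) (cL : convergence L) :
  conv_group cG -> conv_group cH -> conv_group cL ->
  (forall K : Gamma cG cL -> Prop,
     compact (Gamma_s_conv cG cL) K -> equicontinuous cG cL K) ->
  forall u : G -> H -> L,
    is_bihom u -> separately_continuous cG cH cL u ->
    (locally_compact cH ->  jointly_continuous cG cH cL u) /\
    (first_countable cG /\ first_countable cH /\ topological_group cL ->
       jointly_continuous cG cH cL u).
Proof.
move=> cgG cgH cgL hcomp u hb hs; split.
- move=> hLC; apply: joint_continuity_from_origin => //.
  exact: origin_continuity_locally_compact hcomp hLC.
- move=> [fcG [fcH [_ topL]]]; apply: joint_continuity_from_origin => //.
  exact: origin_continuity_first_countable hcomp fcG fcH topL.
Qed.
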